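(* Fix $c>0$, $0\le\alpha\le1$, $t=\lfloor cn^\alpha\rfloor$ with $1\le t\le\frac{n+1}{2}$. With $s=n-4t+2$, $\Delta_n=(n+1)^2+4s$, $\rho_n=\frac{-(s+1)+\sqrt{\Delta_n}}{4t}$, $c_n=2t\rho_n^2+n+1-2t$, $\lambda_m=\frac{n-3+\sqrt{\Delta_n}}{2n}$, $\theta_m=\arccos\lambda_m$, define $\beta_+\in\mathbb{C}^{\mathcal{A}}$ by $$\beta_+(a)=\frac{1}{\sqrt{nc_n}\sin\theta_m}\times\begin{cases}-\rho_n(1+\cos\theta_m),&a\in\mathcal{A}_1,\\ \rho_n(1+\cos\theta_m),&a\in\mathcal{A}_2,\\ \rho_n(1-\cos\theta_m),&a\in\mathcal{A}_3,\\ \rho_n-\cos\theta_m,&a\in\mathcal{A}_4,\\ 1-\rho_n\cos\theta_m,&a\in\mathcal{A}_5,\\ 1-\cos\theta_m,&a\in\mathcal{A}_6.\end{cases}$$ Then the finding probability of $\beta_+$ on the marked edges, $$FP_n=\sum_{a\in\mathcal{M}}\big(|\beta_+(a)|^2+|\beta_+(a^{-1})|^2\big)=\frac{2t\rho_n^2(1+\cos\theta_m)^2}{nc_n\sin^2\theta_m},$$ satisfies $FP_n=1-o(1)$ as $n\to\infty$.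
   Context: Setting. $K_{n+1}$ is the complete graph on the vertex set $V$ with $|V|=n+1$, edge set $E$. The arc set is $\mathcal{A}=\{(x,y): x\ne y\}$; for $a=(x,y)$, $o(a)=x$, $t(a)=y$, $a^{-1}=(y,x)$. A map $\sigma:\mathcal{A}\to\{\pm1\}$ satisfies: $\sigma(a)=-1$ implies $\sigma(a^{-1})=1$. $\mathcal{M}=\{a:\sigma(a)=-1\}$, $\mathcal{M}^{-1}=\{a^{-1}:a\in\mathcal{M}\}$, $\tau(xy)=\sigma((x,y))\sigma((y,x))$, $M=\{e\in E:\tau(e)=-1\}$ (marked edges), assumed to be a $t$-matching (set of $t$ pairwise vertex-disjoint edges), and $\partial M$ is the set of endpoints of edges of $M$. Partition: $\mathcal{A}_1=\mathcal{M}$; $\mathcal{A}_2=\mathcal{M}^{-1}$; $\mathcal{A}_3=\{a\notin\mathcal{M}\cup\mathcal{M}^{-1}: t(a),o(a)\in\partial M\}$; $\mathcal{A}_4=\{a: t(a)\in\partial M,\ o(a)\notin\partial M\}$; $\mathcal{A}_5=\{a: t(a)\notin\partial M,\ o(a)\in\partial M\}$; $\mathcal{A}_6=\{a:t(a),o(a)\notin\partial M\}$. *)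

From Stdlib Require Import Reals.
From HB Require Import structures.
From mathcomp Require Import all_boot all_order all_algebra.
From mathcomp Require Import Rstruct.

Set Implicit Arguments.
Unset Strict Implicit.
Unset Printing Implicit Defensive.

(* Vertices: a finType V with #|V| = n+1.  Arcs: pairs (x,y) with x <> y.
   sigma : V -> V -> int, only relevant on arcs, with values in {1,-1}. *)

Definition is_arc (V : finType) (a : V * V) : bool := a.1 != a.2.

Definition arc_inv (V : finType) (a : V * V) : V * V := (a.2, a.1).

Definition sigma_valid (V : finType) (sigma : V -> V -> int) : Prop :=
  (forall x y : V, x != y -> sigma x y = 1%R \/ sigma x y = (-1)%R) /\
  (forall x y : V, x != y -> sigma x y = (-1)%R -> sigma y x = 1%R).

Definition Mcal (V : finType) (sigma : V -> V -> int) : {set V * V} :=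
  [set a : V * V | is_arc a && (sigma a.1 a.2 == (-1)%R)].

Definition tau (V : finType) (sigma : V -> V -> int) (x y : V) : int :=
  (sigma x y * sigma y x)%R.

Definition Medges (V : finType) (sigma : V -> V -> int) : {set {set V}} :=
  [set e : {set V} | [exists x : V, exists y : V,
      [&& x != y, e == [set x; y] & tau sigma x y == (-1)%R]]].

Definition is_t_matching (V : finType) (M : {set {set V}}) (t : nat) : Prop :=
  #|M| = t /\
  (forall e1 e2, e1 \in M -> e2 \in M -> e1 != e2 -> [disjoint e1 & e2]).

Definition dM (V : finType) (sigma : V -> V -> int) : {set V} :=
  \bigcup_(e in Medges sigma) e.

Definition A1 (V : finType) (sigma : V -> V -> int) : {set V * V} := Mcal sigma.
Definition A2 (V : finType) (sigma : V -> V -> int) : {set V * V} :=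
  [set a : V * V | arc_inv a \in Mcal sigma].
Definition A3 (V : finType) (sigma : V -> V -> int) : {set V * V} :=
  [set a : V * V | [&& is_arc a, a \notin A1 sigma, a \notin A2 sigma,
                      a.2 \in dM sigma & a.1 \in dM sigma]].
Definition A4 (V : finType) (sigma : V -> V -> int) : {set V * V} :=
  [set a : V * V | [&& is_arc a, a.2 \in dM sigma & a.1 \notin dM sigma]].
Definition A5 (V : finType) (sigma : V -> V -> int) : {set V * V} :=
  [set a : V * V | [&& is_arc a, a.2 \notin dM sigma & a.1 \in dM sigma]].
Definition A6 (V : finType) (sigma : V -> V -> int) : {set V * V} :=
  [set a : V * V | [&& is_arc a, a.2 \notin dM sigma & a.1 \notin dM sigma]].

Local Open Scope R_scope.

(* t = floor(c n^alpha); Int_part x = up x - 1 is the floor of x *)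
Definition tfun (c alpha : R) (n : nat) : nat :=
  Z.to_nat (Int_part (c * Rpower (INR n) alpha)).

Definition s_ (n t : nat) : R := INR n - 4 * INR t + 2.
Definition Delta (n t : nat) : R := (INR n + 1) ^ 2 + 4 * s_ n t.
Definition rho (n t : nat) : R := (- (s_ n t + 1) + sqrt (Delta n t)) / (4 * INR t).
Definition cn (n t : nat) : R := 2 * INR t * (rho n t) ^ 2 + INR n + 1 - 2 * INR t.
Definition lambda_m (n t : nat) : R := (INR n - 3 + sqrt (Delta n t)) / (2 * INR n).
Definition theta_m (n t : nat) : R := acos (lambda_m n t).

(* beta_+ (real-valued entries of the vector in C^A) *)
Definition beta_plus (n t : nat) (V : finType) (sigma : V -> V -> int) (a : V * V) : R :=
  let r := rho n t in
  let th := theta_m n t in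
  / (sqrt (INR n * cn n t) * sin th) *
  (if a \in A1 sigma then - r * (1 + cos th)
   else if a \in A2 sigma then r * (1 + cos th)
   else if a \in A3 sigma then r * (1 - cos th)
   else if a \in A4 sigma then r - cos th
   else if a \in A5 sigma then 1 - r * cos th
   else if a \in A6 sigma then 1 - cos th
   else 0).

Definition FP (c alpha : R) (n : nat) : R :=
  let t := tfun c alpha n in
  2 * INR t * (rho n t) ^ 2 * (1 + cos (theta_m n t)) ^ 2
  / (INR n * cn n t * (sin (theta_m n t)) ^ 2).

(* On a marked edge {x, y} exactly one of the two arcs has
   sigma = -1, so a -> {a.1, a.2} is a bijection from the arc set Mcal onto
   the set of marked edges, and |Mcal| = t.  Every arc a of Mcal lies in A1
   and its reverse in A2, hence each term of the sum equals the same constant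
   2 rho^2 (1 + cos theta)^2 / (n c_n sin^2 theta); summing gives FP_n.

   Writing N = n, T = t and K = N + 3 + sqrt Delta, one has
   Delta = (N + 3)^2 - 16 T, rho = 1 - 4 / K, cos theta = lambda, and the
   closed form collapses to FP = rho^2 (1 + lambda) K / (4 c_n).  Elementary
   estimates (N - 3 <= c_n <= N + 1, 2N <= K <= 2N + 6, rho >= 1 - 2/N,
   lambda >= 1 - 2/N) give |FP_n - 1| <= 12 / n for n >= 12, and a sequence
   that is eventually within k / n of l converges to l. *)
From Pilot Require Import Defs.
From Stdlib Require Import Reals Lra Psatz.
From HB Require Import structures.
From mathcomp Require Import all_boot all_order all_algebra.
From mathcomp Require Import Rstruct.

Set Implicit Arguments.
Unset Strict Implicit.
Unset Printing Implicit Defensive.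

Import GRing.Theory.

Section MarkedArcs.

Variables (V : finType) (sigma : V -> V -> int).
Hypothesis sigma_ok : sigma_valid sigma.

Definition arc_edge (a : V * V) : {set V} := [set a.1; a.2].

Lemma set2_eq (x y u v : V) : x != y -> [set x; y] = [set u; v] ->
  (x = u /\ y = v) \/ (x = v /\ y = u).
Proof.
move=> neq_xy E.
have /set2P[] : x \in [set u; v] by rewrite -E set21.
all: have /set2P[] : y \in [set u; v] by rewrite -E set22.
all: by move=> ex ey; subst; auto; rewrite eqxx in neq_xy.
Qed.

Lemma Mcal_inv_notin (a : V * V) : a \in Mcal sigma -> arc_inv a \notin Mcal sigma.
Proof.
case: a => x y; rewrite !inE /is_arc /arc_inv /= => /andP[neq_xy /eqP sxy].
apply/negP => /andP[_ /eqP syx].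
by have := proj2 sigma_ok x y neq_xy sxy; rewrite syx.
Qed.

Lemma arc_edge_inj : {in Mcal sigma &, injective arc_edge}.
Proof.
case=> x y [u v]; rewrite !inE /is_arc /arc_edge /=.
move=> /andP[neq_xy /eqP sxy] /andP[_ /eqP suv] E.
case: (set2_eq neq_xy E) => [[-> ->] //|[ex ey]]; subst.
by have := proj2 sigma_ok _ _ neq_xy sxy; rewrite suv.
Qed.

(* The marked edges are exactly the edges carried by the arcs of Mcal:
   tau(xy) = -1 forces exactly one of sigma(x,y), sigma(y,x) to be -1. *)
Lemma Medges_arc_edge : Medges sigma = arc_edge @: Mcal sigma.
Proof.
apply/setP => e; apply/idP/imsetP.
- rewrite inE => /existsP[x /existsP[y /and3P[neq_xy /eqP -> /eqP tau_xy]]].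
  have neq_yx : y != x by rewrite eq_sym.
  move: tau_xy; rewrite /tau.
  case: (proj1 sigma_ok _ _ neq_xy) => sxy; case: (proj1 sigma_ok _ _ neq_yx) => syx;
    rewrite sxy syx => // _.
  + by exists (y, x); rewrite ?inE /is_arc /= ?neq_yx ?syx // /arc_edge setUC.
  + by exists (x, y); rewrite ?inE /is_arc /= ?neq_xy ?sxy.
- case=> [[x y]]; rewrite inE /is_arc /= => /andP[neq_xy /eqP sxy] ->.
  rewrite inE; apply/existsP; exists x; apply/existsP; exists y.
  by rewrite neq_xy eqxx /tau sxy (proj2 sigma_ok _ _ neq_xy sxy).
Qed.

Lemma card_Mcal : #|Mcal sigma| = #|Medges sigma|.
Proof. by rewrite Medges_arc_edge card_in_imset //; exact: arc_edge_inj. Qed.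

End MarkedArcs.

Local Open Scope R_scope.

Lemma cn_ge0 (n t : nat) : (2 * t <= n + 1)%N -> 0 <= cn n t.
Proof.
move=> /leP /le_INR; rewrite mult_INR plus_INR /= => le_2t.
have := pos_INR t; rewrite /cn; nra.
Qed.

(* On a marked arc a, beta_+(a) and beta_+(a^{-1}) are the A1 and A2 values,
   so every term of the finding-probability sum is the same constant. *)
Lemma marked_term (n t : nat) (V : finType) (sigma : V -> V -> int) (a : V * V) :
  sigma_valid sigma -> a \in Mcal sigma ->
  Rsqr (Rabs (beta_plus n t sigma a)) + Rsqr (Rabs (beta_plus n t sigma (arc_inv a)))
  = 2 * rho n t ^ 2 * (1 + cos (theta_m n t)) ^ 2
    * Rsqr (/ (sqrt (INR n * cn n t) * sin (theta_m n t))).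
Proof.
move=> sigma_ok Ma.
have inv_inv : arc_inv (arc_inv a) = a by case: a {Ma}.
rewrite -!Rsqr_abs /beta_plus /A1 /A2 Ma (negbTE (Mcal_inv_notin sigma_ok Ma)).
rewrite inE inv_inv Ma /Rsqr; ring.
Qed.

Definition fp (n t : nat) : R :=
  2 * INR t * rho n t ^ 2 * (1 + cos (theta_m n t)) ^ 2
  / (INR n * cn n t * sin (theta_m n t) ^ 2).

Lemma sum_marked (n t : nat) (V : finType) (sigma : V -> V -> int) :
  (2 * t <= n + 1)%N -> sigma_valid sigma -> #|Mcal sigma| = t ->
  (\sum_(a in Mcal sigma)
      (Rsqr (Rabs (beta_plus n t sigma a))
       + Rsqr (Rabs (beta_plus n t sigma (arc_inv a)))))%R = fp n t.
Proof.
move=> le_2t sigma_ok card_t.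
rewrite (eq_bigr _ (fun a => @marked_term n t V sigma a sigma_ok)) sumr_const card_t.
rewrite -mulr_natl -INRE -RmultE.
have nc_ge0 : 0 <= INR n * cn n t by apply: Rmult_le_pos; [exact: pos_INR | exact: cn_ge0].
rewrite Rsqr_inv' Rsqr_mult Rsqr_sqrt; last exact: nc_ge0.
(* The sum lives in the realType carrier of R; restate it over R for ring. *)
match goal with |- ?lhs = ?rhs => change (@eq R lhs rhs) end.
by rewrite Rsqr_pow2 /fp /Rdiv; ring.
Qed.

Section Asymptotics.

Variables n t : nat.
Hypothesis t_ge1 : (1 <= t)%N.
Hypothesis t_le : (2 * t <= n + 1)%N.
Hypothesis n_ge12 : (12 <= n)%N.

Local Notation N := (INR n).
Local Notation T := (INR t).
Local Notation D := (sqrt (Defs.Delta n t)).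
Local Notation K := (N + 3 + D).

Lemma T_ge1 : 1 <= T.
Proof. by apply: (le_INR 1); apply/leP. Qed.

Lemma T_le : 2 * T <= N + 1.
Proof. by have := le_INR _ _ (elimT leP t_le); rewrite mult_INR plus_INR. Qed.

Lemma N_ge12 : 12 <= N.
Proof. have := le_INR _ _ (elimT leP n_ge12); rewrite /=; lra. Qed.

Lemma Delta_eq : Defs.Delta n t = (N + 3) ^ 2 - 16 * T.
Proof. rewrite /Defs.Delta /s_; ring. Qed.

Lemma Delta_ge0 : 0 <= Defs.Delta n t.
Proof. rewrite Delta_eq; have := T_le; have := pow2_ge_0 (N - 1); lra. Qed.

Lemma sqrtDelta_sq : D * D = (N + 3) ^ 2 - 16 * T.
Proof. rewrite -Delta_eq; exact: sqrt_sqrt Delta_ge0. Qed.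

Lemma sqrtDelta_bounds : N - 1 <= D < N + 3.
Proof.
have := sqrtDelta_sq; have := sqrt_pos (Defs.Delta n t); have := T_ge1; have := T_le.
move=> *; nra.
Qed.

Lemma K_bounds : 2 * N + 2 <= K < 2 * N + 6.
Proof. have := sqrtDelta_bounds; lra. Qed.

Lemma invN_bounds : 0 < / N <= / 12.
Proof.
have := N_ge12 => ?.
split; [apply: Rinv_0_lt_compat | apply: Rinv_le_contravar]; lra.
Qed.

Lemma N_invN : N * / N = 1.
Proof. have := N_ge12 => ?; field; lra. Qed.

Lemma lambda_eq : lambda_m n t * (2 * N) = N - 3 + D.
Proof. have := N_ge12; rewrite /lambda_m; move=> ?; field; lra. Qed.

Lemma lambda_bounds : 1 - 2 / N <= lambda_m n t < 1.
Proof.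
have := lambda_eq; have := sqrtDelta_bounds; have := N_ge12; have := N_invN.
have := invN_bounds; rewrite /Rdiv => *; nra.
Qed.

Lemma cos_theta : cos (theta_m n t) = lambda_m n t.
Proof.
have := lambda_bounds; have := invN_bounds => *.
by rewrite /theta_m cos_acos //; lra.
Qed.

Lemma sin_theta_sq : sin (theta_m n t) ^ 2 = 1 - lambda_m n t ^ 2.
Proof. by rewrite -cos_theta -(sin2_cos2 (theta_m n t)) /Rsqr; ring. Qed.

(* rho = 1 - 4 / K, because (sqrt Delta - N - 3) K = Delta - (N + 3)^2 = -16 T. *)
Lemma rho_eq : rho n t = 1 - 4 / K.
Proof.
have := K_bounds; have := T_ge1; have := N_ge12; have := sqrtDelta_sq => *.
by rewrite /rho /s_; field_simplify_eq; [nra | lra].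
Qed.

Lemma rho_bounds : 1 - 2 / N <= rho n t <= 1.
Proof.
have := K_bounds; have := N_ge12; have := N_invN; have := invN_bounds => *.
have invK_pos : 0 < / K by apply: Rinv_0_lt_compat; lra.
have invK_le : / K <= / (2 * N) by apply: Rinv_le_contravar; lra.
rewrite Rinv_mult in invK_le.
rewrite rho_eq /Rdiv; lra.
Qed.

(* c_n = N + 1 - 2T (1 - rho^2) and 0 <= 2T (1 - rho^2) <= 16 T / K <= 4. *)
Lemma cn_bounds : N - 3 <= cn n t <= N + 1.
Proof.
have [r_lo r_hi] := rho_bounds; have [K_lo _] := K_bounds.
have [_ invN_le] := invN_bounds; have T_lo := T_ge1; have T_hi := T_le.
set r := rho n t in r_lo r_hi *.
have r_ge0 : 0 <= r by rewrite /Rdiv in r_lo; lra.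
have rK : (1 - r) * K = 4 by rewrite /r rho_eq; field; lra.
have defect_ge0 : 0 <= 2 * T * (1 - r ^ 2).
  by apply: Rmult_le_pos; [lra | nra].
have defect_le4 : 2 * T * (1 - r ^ 2) <= 4.
  apply: (Rmult_le_reg_r K); first lra.
  have -> : 2 * T * (1 - r ^ 2) * K = 4 * (2 * T * (1 + r)) by rewrite -rK; ring.
  nra.
rewrite /cn -/r; split; lra.
Qed.

(* The key identity behind the closed form:
   N (1 - lambda) K = ((N + 3 - sqrt Delta) / 2) (N + 3 + sqrt Delta) = 8 T. *)
Lemma lambda_K : N * (1 - lambda_m n t) * K = 8 * T.
Proof.
have := N_ge12 => ?.
have -> : N * (1 - lambda_m n t) * K = (2 * N - lambda_m n t * (2 * N)) * K / 2.
  by field.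
rewrite lambda_eq; have := sqrtDelta_sq; lra.
Qed.

(* Hence 2T / (N (1 - lambda)) = K / 4 and FP collapses to a product of
   quantities that are all close to their limits. *)
Lemma fp_eq : fp n t = rho n t ^ 2 * (1 + lambda_m n t) * K / (4 * cn n t).
Proof.
have [L_lo L_hi] := lambda_bounds; have [invN_pos invN_le] := invN_bounds.
have cn_lo := proj1 cn_bounds; have N_lo := N_ge12; have key := lambda_K.
have L_pos : 0 < lambda_m n t by rewrite /Rdiv in L_lo; lra.
rewrite /fp cos_theta sin_theta_sq.
rewrite (_ : 2 * T = N * (1 - lambda_m n t) * K / 4); last lra.
rewrite (_ : 1 - lambda_m n t ^ 2 = (1 - lambda_m n t) * (1 + lambda_m n t)); last ring.
field; repeat split; lra.
Qed.

Lemma numerator_bounds :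
  (1 - 2 / N) ^ 2 * (2 - 2 / N) * (2 * N) <= rho n t ^ 2 * (1 + lambda_m n t) * K
  <= 2 * (2 * N * (1 + 3 / N)).
Proof.
have [r_lo r_hi] := rho_bounds; have [L_lo L_hi] := lambda_bounds.
have [K_lo K_hi] := K_bounds; have [invN_pos invN_le] := invN_bounds.
have NinvN := N_invN; have N_lo := N_ge12.
rewrite /Rdiv in r_lo L_lo *.
have r_ge0 : 0 <= 1 - 2 * / N by lra.
split.
- apply: Rmult_le_compat; try nra.
  apply: Rmult_le_compat; nra.
- apply: Rmult_le_compat; nra.
Qed.

Lemma fp_bounds : 1 - 12 / N <= fp n t <= 1 + 12 / N.
Proof.
have [num_lo num_hi] := numerator_bounds; have [C_lo C_hi] := cn_bounds.
have [invN_pos invN_le] := invN_bounds; have NinvN := N_invN; have N_lo := N_ge12.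
rewrite fp_eq /Rdiv in num_lo num_hi *.
set A := rho n t ^ 2 * (1 + lambda_m n t) * K in num_lo num_hi *.
set d := / N in invN_pos invN_le NinvN num_lo num_hi *.
have C_pos : 0 < 4 * cn n t by lra.
have divC : A * / (4 * cn n t) * (4 * cn n t) = A by field; lra.
split; apply: (Rmult_le_reg_r (4 * cn n t)) => //; rewrite divC.
- have : (1 + d) * (1 - 12 * d) <= (1 - 2 * d) ^ 2 * (1 - d) by nra.
  nra.
- have : 1 + 3 * d <= (1 - 3 * d) * (1 + 12 * d) by nra.
  nra.
Qed.

End Asymptotics.

Lemma Un_cv_rate (u : nat -> R) (l k : R) (N0 : nat) :
  (forall n, (N0 <= n)%N -> Rabs (u n - l) <= k / INR n) -> Un_cv u l.
Proof.
move=> close eps eps_pos.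
have [M [invM_lt M_pos]] := archimed_cor1 (eps / (Rabs k + 1))
  (Rdiv_lt_0_compat _ _ eps_pos (Rle_lt_0_plus_1 _ (Rabs_pos k))).
exists (maxn N0 M) => n /leP; rewrite geq_max => /andP[N0_n M_n].
have M_le : 0 < INR M <= INR n by split; [exact: lt_0_INR | apply: le_INR; apply/leP].
have invn_le : / INR n <= / INR M by apply: Rinv_le_contravar; lra.
have invn_pos : 0 < / INR n by apply: Rinv_0_lt_compat; lra.
have eps_eq : eps / (Rabs k + 1) * (Rabs k + 1) = eps.
  by field; have := Rabs_pos k; lra.
have k_abs := Rle_abs k; have k_pos := Rabs_pos k.
have rate_le : k * / INR n <= (Rabs k + 1) * / INR M by nra.
have rate_lt : (Rabs k + 1) * / INR M < eps by nra.
apply: (Rle_lt_trans _ _ _ (close n N0_n)); rewrite /Rdiv; lra.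
Qed.

Lemma FP_cv (c alpha : R) (N0 : nat) :
  (forall n, (N0 <= n)%N -> (1 <= tfun c alpha n)%N /\ (2 * tfun c alpha n <= n + 1)%N) ->
  Un_cv (FP c alpha) 1.
Proof.
move=> t_ok; apply: (@Un_cv_rate _ _ 12 (maxn N0 12)) => n.
rewrite geq_max => /andP[N0_n n_ge12]; have [t_ge1 t_le] := t_ok n N0_n.
have := fp_bounds t_ge1 t_le n_ge12; rewrite /FP -/(fp n _) => ?.
apply: Rabs_le; lra.
Qed.

Theorem mainTheorem9 (c alpha : R) :
  Rlt 0 c -> Rle 0 alpha /\ Rle alpha 1 ->
  (exists N : nat, forall n : nat, (N <= n)%N ->
      (1 <= tfun c alpha n)%N /\ (2 * tfun c alpha n <= n + 1)%N) ->
  (forall (n : nat) (V : finType) (sigma : V -> V -> int),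
      (1 <= tfun c alpha n)%N -> (2 * tfun c alpha n <= n + 1)%N ->
      #|V| = n.+1 -> sigma_valid sigma ->
      is_t_matching (Medges sigma) (tfun c alpha n) ->
      (\sum_(a in Mcal sigma)
         Rplus (Rsqr (Rabs (beta_plus n (tfun c alpha n) sigma a)))
               (Rsqr (Rabs (beta_plus n (tfun c alpha n) sigma (arc_inv a)))))%R
      = FP c alpha n)
  /\ Un_cv (FP c alpha) R1.
Proof.
move=> _ _ [N0 t_ok]; split; last exact: FP_cv t_ok.
move=> n V sigma _ t_le _ sigma_ok [card_M _].
by rewrite sum_marked // card_Mcal.
Qed.
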